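(* Let $\mathcal{N}$ be a cactus network. Then every nonempty set of vertices of $\mathcal{N}$ has a unique lowest common ancestor.
   Context: A cactus network is a finite directed acyclic graph $\mathcal{N}$ with a unique vertex of indegree $0$ (the root) such that in its underlying undirected graph $\mathcal{N}^\star$ every edge belongs to at most one simple cycle. For vertices $u,v$, $u\succcurlyeq v$ ($u$ is an ancestor of $v$) means there is a directed path from $u$ to $v$ (possibly of length $0$), and $u\succ v$ means $u\succcurlyeq v$ and $u\ne v$. A lowest common ancestor of a set $V$ of vertices is a vertex $u$ with $u\succcurlyeq v$ for all $v\in V$ such that there is no vertex $u'$ with $u\succ u'$ and $u'\succcurlyeq v$ for all $v\in V$. *)

From mathcomp Require Import all_boot.
Set Implicit Arguments. Unset Strict Implicit. Unset Printing Implicit Defensive.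

Section Cactus.
Variables (V : finType) (E : rel V).

Definition dag_acyclic : Prop := forall u v, E u v -> ~~ connect E v u.

Definition indeg0 (r : V) : bool := [forall u, ~~ E u r].

Definition uedge : rel V := fun x y => E x y || E y x.

Definition simple_ucycle (c : seq V) : bool :=
  [&& 2 < size c, uniq c & cycle uedge c].

Definition cycle_has_edge (c : seq V) (x y : V) : bool :=
  [&& x \in c, y \in c & (next c x == y) || (next c y == x)].

(* every edge of N* belongs to at most one simple cycle
   (two simple cycles are the same iff they have the same edge set) *)
Definition edge_in_at_most_one_cycle : Prop :=
  forall c1 c2 x y, simple_ucycle c1 -> simple_ucycle c2 ->
    uedge x y -> cycle_has_edge c1 x y -> cycle_has_edge c2 x y ->
    forall a b, cycle_has_edge c1 a b = cycle_has_edge c2 a b.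

Definition cactus_network : Prop :=
  [/\ dag_acyclic, (exists! r, indeg0 r) & edge_in_at_most_one_cycle].

Definition anc (u v : V) : bool := connect E u v.
Definition sanc (u v : V) : bool := anc u v && (u != v).

Definition common_anc (A : {set V}) (u : V) : Prop := forall v, v \in A -> anc u v.

Definition is_lca (A : {set V}) (u : V) : Prop :=
  common_anc A u /\ ~ (exists u', sanc u u' /\ common_anc A u').

End Cactus.

From Pilot Require Import Defs.
From mathcomp Require Import all_boot.

Set Implicit Arguments. Unset Strict Implicit. Unset Printing Implicit Defensive.

(* Existence: the unique source is an ancestor of every vertex, and an
   ancestor-maximal common ancestor of A is a lowest common ancestor.
   Uniqueness: two distinct lowest common ancestors u1, u2 of A are
   incomparable.  Let z be a lowest common ancestor of u1 and u2, and fix the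
   first arc z -> y1 of a path from z to u1.  For every minimal common
   descendant m of u1 and u2, paths z -> u1 -> m and z -> u2 -> m meet only at
   their ends (by the choice of z and m), so they glue into a simple cycle of
   the underlying graph through the edge {z, y1}.  By the cactus property all
   these cycles have the same vertices, and every vertex of the cycle through
   m' lies below u1, u2 or m'; so m lies below m'.  Hence u1 and u2 have a
   unique minimal common descendant, which lies below every vertex of A and
   strictly below u1, a contradiction. *)

Lemma next_last (T : eqType) (x : T) p : uniq (x :: p) -> next (x :: p) (last x p) = x.
Proof.
move=> xp_uniq; rewrite next_nth mem_last index_last //.
by rewrite nth_default.
Qed.

Section DagAncestry.
Variables (V : finType) (E : rel V).
Hypothesis acyclic : dag_acyclic E.

Local Notation anc := (anc E).
Local Notation sanc := (sanc E).

Lemma anc_antisym x y : anc x y -> anc y x -> x = y.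
Proof.
move=> /connectP [[|w p] //= /andP [Exw pw] ->] Hyx.
have /negP[] := acyclic Exw.
by apply: connect_trans Hyx; apply/connectP; exists p.
Qed.

Lemma dag_path_uniq x p : path E x p -> uniq (x :: p).
Proof.
elim: p x => [//|y p IHp] x /andP [Exy pth].
rewrite cons_uniq IHp // andbT; apply/negP => x_yp.
by have /negP[] := acyclic Exy; apply: (path_connect pth).
Qed.

Lemma mem_path_sanc x p w : path E x p -> w \in p -> sanc x w.
Proof.
move=> pth wp; rewrite /sanc /Defs.anc (path_connect pth) ?inE ?wp ?orbT //=.
apply/eqP => xw; have := dag_path_uniq pth.
by rewrite /= xw wp.
Qed.

Lemma mem_path_anc x p w : path E x p -> w \in p -> anc x w /\ anc w (last x p).
Proof.
move=> pth wp; split; first by apply: (path_connect pth); rewrite inE wp orbT.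
case/splitPr: wp pth => p1 p2; rewrite cat_path last_cat => /andP [_ /andP [_ pth2]].
exact: (path_connect pth2 (mem_last w p2)).
Qed.

Lemma sanc_card_ancestors x y :
  sanc x y -> #|[set w | anc w x]| < #|[set w | anc w y]|.
Proof.
case/andP => Hxy nxy; apply: proper_card; apply/properP; split.
  by apply/subsetP => w; rewrite !inE => /connect_trans; apply.
exists y; rewrite !inE ?connect0 //; apply: contra nxy => Hyx.
by rewrite (anc_antisym Hxy Hyx).
Qed.

Lemma exists_anc_minimal (P : pred V) x0 : P x0 ->
  exists2 x, P x & forall y, P y -> anc y x -> y = x.
Proof.
move=> Px0; case: (arg_minnP (fun x => #|[set w | anc w x]|) Px0) => x Px xmin.
exists x => // y Py Hyx; apply/eqP; apply: contraT => nyx.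
by have := xmin y Py; rewrite leqNgt sanc_card_ancestors // /sanc Hyx.
Qed.

Lemma exists_anc_maximal (P : pred V) x0 : P x0 ->
  exists2 x, P x & forall y, P y -> anc x y -> y = x.
Proof.
move=> Px0; case: (arg_maxnP (fun x => #|[set w | anc w x]|) Px0) => x Px xmax.
exists x => // y Py Hxy; apply/eqP; apply: contraT => nyx.
by have := xmax y Py; rewrite /= leqNgt sanc_card_ancestors // /sanc Hxy eq_sym.
Qed.

Lemma unique_source_anc r :
  (forall r', indeg0 E r' -> r = r') -> forall v, anc r v.
Proof.
move=> r_unique v.
have [w Hwv wmin] := @exists_anc_minimal (anc^~ v) v (connect0 _ _).
rewrite (r_unique w) //; apply/forallP => u; apply/negP => Euw.
have Eww : E w w by rewrite -{1}(wmin u (connect_trans (connect1 Euw) Hwv) (connect1 Euw)).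
by have /negP[] := acyclic Eww; apply: connect0.
Qed.

Lemma common_anc_lca (A : {set V}) r : common_anc E A r -> exists u, is_lca E A u.
Proof.
move=> Ar.
have [u /forall_inP Pu umax] :=
  @exists_anc_maximal (fun u => [forall (v | v \in A), anc u v]) r
    (introT forall_inP Ar).
exists u; split=> // -[u' [/andP [Huu' nuu'] Au']].
by move: nuu'; rewrite (umax u') ?eqxx //; apply/forall_inP.
Qed.

Lemma is_lca_anc_eq (A : {set V}) u u' :
  is_lca E A u -> common_anc E A u' -> anc u u' -> u = u'.
Proof.
move=> [_ u_max] Au' uu'; apply/eqP; apply: contraT => nuu'.
by case: u_max; exists u'; rewrite /sanc uu' nuu'.
Qed.

Definition min_common_desc (u1 u2 m : V) : Prop :=
  [/\ anc u1 m, anc u2 m & forall y, anc u1 y -> anc u2 y -> anc y m -> y = m].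

Lemma exists_min_common_desc u1 u2 a :
  anc u1 a -> anc u2 a -> exists2 m, min_common_desc u1 u2 m & anc m a.
Proof.
move=> u1a u2a.
have [m /and3P [u1m u2m ma] mmin] :=
  @exists_anc_minimal (fun m => [&& anc u1 m, anc u2 m & anc m a]) a
    (introT and3P (And3 u1a u2a (connect0 _ _))).
exists m => //; split=> // y u1y u2y ym; apply: mmin => //.
by rewrite u1y u2y; apply: connect_trans ym ma.
Qed.

(* For paths [z :: P] and [z :: Q] with a common end, the closed walk out
   along [P] and back along [Q], ending at [z]. *)
Definition join_paths (z : V) (P Q : seq V) := P ++ rev (belast z Q).

Lemma mem_join_paths z P Q w : w \in join_paths z P Q -> w \in z :: P ++ Q.
Proof.
rewrite mem_cat mem_rev => /orP [wP | /mem_belast].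
  by rewrite inE mem_cat wP orbT.
by rewrite !inE mem_cat => /orP [-> | ->]; rewrite ?orbT.
Qed.

Lemma join_paths_simple_ucycle z y P Q m :
  path E z (y :: P) -> path E z Q -> last y P = m -> last z Q = m ->
  (forall w, w \in y :: P -> w \in Q -> w = m) -> P != [::] ->
  simple_ucycle E (join_paths z (y :: P) Q) /\
  cycle_has_edge (join_paths z (y :: P) Q) y z.
Proof.
move=> pathP pathQ lastP lastQ PQ_disj P_nil.
have := dag_path_uniq pathP; rewrite cons_uniq => /andP [zNyP yP_uniq].
have zQ_uniq := dag_path_uniq pathQ.
have Q_nil : Q != [::].
  by apply: contraNneq zNyP => Q0; have := mem_last y P; rewrite lastP -lastQ Q0.
have last_join : last y (P ++ rev (belast z Q)) = z.
  case: Q Q_nil {pathQ lastQ PQ_disj zQ_uniq} => // q Q _.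
  by rewrite last_cat /= rev_cons last_rcons.
have join_uniq : uniq (join_paths z (y :: P) Q).
  move: zQ_uniq; rewrite lastI lastQ rcons_uniq => /andP [mNzQ zQ_uniq].
  rewrite /join_paths cat_uniq rev_uniq yP_uniq zQ_uniq andbT; apply/hasPn => w.
  rewrite mem_rev => wzQ; apply/negP => wyP.
  case/predU1P: (mem_belast wzQ) => [wz | wQ].
    by rewrite -wz wyP in zNyP.
  by move: wzQ; rewrite (PQ_disj w wyP wQ) (negbTE mNzQ).
split.
- rewrite /simple_ucycle join_uniq (cycle_path z) /join_paths.
  rewrite [last z _]/= last_join cat_path [last z _]/= lastP -lastQ rev_path.
  have -> : path (uedge E) z (y :: P).
    by apply: sub_path pathP => a b Eab; rewrite /uedge Eab.
  have -> : path (fun a b => uedge E b a) z Q.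
    by apply: sub_path pathQ => a b Eab; rewrite /uedge Eab orbT.
  rewrite size_cat size_rev size_belast /= addSn ltnS andbT.
  by rewrite -!size_eq0 -!lt0n in P_nil Q_nil; rewrite (leq_add P_nil Q_nil).
- move: join_uniq; rewrite /cycle_has_edge /join_paths cat_cons => join_uniq.
  have := next_last join_uniq; have := mem_last y (P ++ rev (belast z Q)).
  by rewrite last_join mem_head => -> ->; rewrite eqxx orbT.
Qed.

End DagAncestry.

Lemma cactus_cycles_mem_eq (V : finType) (E : rel V) c1 c2 x y :
  edge_in_at_most_one_cycle E -> simple_ucycle E c1 -> simple_ucycle E c2 ->
  uedge E x y -> cycle_has_edge c1 x y -> cycle_has_edge c2 x y -> c1 =i c2.
Proof.
move=> cactus c1_simple c2_simple Exy c1xy c2xy.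
have mem_sub c c' : simple_ucycle E c -> simple_ucycle E c' ->
    cycle_has_edge c x y -> cycle_has_edge c' x y -> {subset c <= c'}.
  move=> c_simple c'_simple cxy c'xy w wc.
  have := cactus c c' x y c_simple c'_simple Exy cxy c'xy w (next c w).
  by rewrite /cycle_has_edge wc mem_next wc eqxx => /esym /andP [].
by move=> w; apply/idP/idP; apply: mem_sub.
Qed.

Section IncomparableAncestors.
Variables (V : finType) (E : rel V).
Hypotheses (acyclic : dag_acyclic E) (cactus : edge_in_at_most_one_cycle E).

Local Notation anc := (anc E).

Variables (u1 u2 z y1 : V) (s1 s2 : seq V).
Hypotheses (u1Nu2 : ~~ anc u1 u2) (u2Nu1 : ~~ anc u2 u1).
Hypothesis z_lca : is_lca E [set u1; u2] z.
Hypotheses (path1 : path E z (y1 :: s1)) (last1 : last y1 s1 = u1).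
Hypotheses (path2 : path E z s2) (last2 : last z s2 = u2).

Lemma min_common_desc_paths_disjoint m t1 t2 :
  min_common_desc E u1 u2 m -> path E u1 t1 -> path E u2 t2 -> m = last u1 t1 ->
  forall w, w \in y1 :: s1 ++ t1 -> w \in s2 ++ t2 -> w = m.
Proof.
move=> [_ _ mmin] path_t1 path_t2 last_t1 w.
rewrite -cat_cons !mem_cat => /orP [ws1 | wt1] /orP [ws2 | wt2].
- case: z_lca => _; case; exists w.
  split; first exact: (mem_path_sanc acyclic path1 ws1).
  have [_ wu1] := mem_path_anc path1 ws1.
  have [_ wu2] := mem_path_anc path2 ws2.
  by move=> v; rewrite !inE => /orP [] /eqP ->; rewrite -?last1 -?last2.
- have [_ wu1] := mem_path_anc path1 ws1.
  have [u2w _] := mem_path_anc path_t2 wt2.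
  by have /negP[] := u2Nu1; rewrite -last1; apply: connect_trans u2w wu1.
- have [u1w _] := mem_path_anc path_t1 wt1.
  have [_ wu2] := mem_path_anc path2 ws2.
  by have /negP[] := u1Nu2; rewrite -last2; apply: connect_trans u1w wu2.
- have [u1w wm] := mem_path_anc path_t1 wt1.
  have [u2w _] := mem_path_anc path_t2 wt2.
  by apply: mmin; rewrite // last_t1.
Qed.

Lemma min_common_desc_cycle m : min_common_desc E u1 u2 m ->
  exists c, [/\ simple_ucycle E c, cycle_has_edge c y1 z, m \in c &
    {in c, forall w, [|| anc w u1, anc w u2 | anc w m]}].
Proof.
move=> m_mcd; have [u1m u2m _] := m_mcd.
have [t1 path_t1 last_t1] := connectP u1m.
have [t2 path_t2 last_t2] := connectP u2m.
have disj := min_common_desc_paths_disjoint m_mcd path_t1 path_t2 last_t1.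
have zu1 : anc z u1 by case: z_lca => zA _; apply: zA; rewrite !inE eqxx.
have u1_nm : m != u1 by apply: contraNneq u2Nu1 => <-.
have last_P : last y1 (s1 ++ t1) = m by rewrite last_cat last1.
have [c_simple c_edge] :
    simple_ucycle E (join_paths z (y1 :: s1 ++ t1) (s2 ++ t2)) /\
    cycle_has_edge (join_paths z (y1 :: s1 ++ t1) (s2 ++ t2)) y1 z.
  apply: (join_paths_simple_ucycle acyclic _ _ last_P _ disj).
  - by rewrite -cat_cons cat_path path1 /= last1.
  - by rewrite cat_path path2 last2.
  - by rewrite last_cat last2.
  - apply: contraNneq u1_nm => /nilP; rewrite cat_nilp => /andP [_ /nilP t1_nil].
    by rewrite last_t1 t1_nil.
exists (join_paths z (y1 :: s1 ++ t1) (s2 ++ t2)); split => //.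
  by rewrite mem_cat -last_P mem_last.
move=> w /mem_join_paths; rewrite inE mem_cat -cat_cons !mem_cat.
case/orP => [/eqP -> | /orP [/orP [ws1 | wt1] | /orP [ws2 | wt2]]].
- by rewrite zu1.
- by have [_] := mem_path_anc path1 ws1; rewrite /= last1 => ->.
- by have [_] := mem_path_anc path_t1 wt1; rewrite -last_t1 => ->; rewrite !orbT.
- by have [_] := mem_path_anc path2 ws2; rewrite last2 => ->; rewrite orbT.
- by have [_] := mem_path_anc path_t2 wt2; rewrite -last_t2 => ->; rewrite !orbT.
Qed.

Lemma min_common_desc_unique m m' :
  min_common_desc E u1 u2 m -> min_common_desc E u1 u2 m' -> m = m'.
Proof.
have anc_other m0 m0' : min_common_desc E u1 u2 m0 -> min_common_desc E u1 u2 m0' ->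
    anc m0 m0'.
  move=> m0_mcd m0'_mcd; have [u1m0 u2m0 _] := m0_mcd.
  have [c [c_simple c_edge m0c _]] := min_common_desc_cycle m0_mcd.
  have [c' [c'_simple c'_edge _ c'_anc]] := min_common_desc_cycle m0'_mcd.
  have Ezy1 : uedge E y1 z by case/andP: path1 => Ezy1 _; rewrite /uedge Ezy1 orbT.
  rewrite (cactus_cycles_mem_eq cactus c_simple c'_simple Ezy1 c_edge c'_edge) in m0c.
  case/or3P: (c'_anc m0 m0c) => // [m0u1 | m0u2].
  - by have /negP[] := u2Nu1; apply: connect_trans u2m0 m0u1.
  - by have /negP[] := u1Nu2; apply: connect_trans u1m0 m0u2.
move=> m_mcd m'_mcd.
by apply: (anc_antisym acyclic (anc_other _ _ m_mcd m'_mcd)); apply: anc_other.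
Qed.

Lemma min_common_desc_anc m w :
  min_common_desc E u1 u2 m -> anc u1 w -> anc u2 w -> anc m w.
Proof.
move=> m_mcd u1w u2w; have [m' m'_mcd m'w] := exists_min_common_desc acyclic u1w u2w.
by rewrite (min_common_desc_unique m_mcd m'_mcd).
Qed.

End IncomparableAncestors.

Lemma cactus_lca_unique (V : finType) (E : rel V) r (A : {set V}) u1 u2 :
  dag_acyclic E -> edge_in_at_most_one_cycle E -> (forall v, anc E r v) ->
  A != set0 -> is_lca E A u1 -> is_lca E A u2 -> u1 = u2.
Proof.
move=> acyclic cactus r_anc /set0Pn [a aA] u1_lca u2_lca.
have [u1A u2A] := (u1_lca.1, u2_lca.1).
have [u1u2 | u1Nu2] := boolP (anc E u1 u2); first exact: is_lca_anc_eq u1_lca u2A u1u2.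
have [u2u1 | u2Nu1] := boolP (anc E u2 u1).
  exact/esym/(is_lca_anc_eq u2_lca u1A u2u1).
have [z z_lca] := common_anc_lca acyclic (A := [set u1; u2]) (fun v _ => r_anc v).
have [zu1 zu2] : anc E z u1 /\ anc E z u2.
  by case: z_lca => zA _; split; apply: zA; rewrite !inE eqxx ?orbT.
have [[|y1 s1] path1 last1] := connectP zu1.
  by rewrite last1 zu2 in u1Nu2.
have [s2 path2 last2] := connectP zu2.
have [m m_mcd _] := exists_min_common_desc acyclic (u1A a aA) (u2A a aA).
have m_anc := min_common_desc_anc acyclic cactus u1Nu2 u2Nu1 z_lca path1
  (esym last1) path2 (esym last2) m_mcd.
have [u1m u2m _] := m_mcd.
have u1_eq_m := is_lca_anc_eq u1_lca (fun b bA => m_anc b (u1A b bA) (u2A b bA)) u1m.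
by rewrite u1_eq_m u2m in u2Nu1.
Qed.

Theorem lemma4 (V : finType) (E : rel V) :
  cactus_network E ->
  forall A : {set V}, A != set0 -> exists! u : V, is_lca E A u.
Proof.
move=> [acyclic [r [_ r_unique]] cactus] A A_nonempty.
have r_anc := unique_source_anc acyclic r_unique.
have [u u_lca] := common_anc_lca acyclic (A := A) (fun v _ => r_anc v).
exists u; split=> // u' u'_lca.
exact: cactus_lca_unique acyclic cactus r_anc A_nonempty u_lca u'_lca.
Qed.
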